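(* Let $(M,\circ)$ be a fuzzy $\Gamma$-hypersemigroup. Then for all $a,b\in M$, $\alpha,\beta\in\Gamma$ and all fuzzy subsets $\mu,\nu,\delta$ of $M$: (i) $a\circ\alpha\circ(b\circ\beta\circ\mu)=(a\circ\alpha\circ b)\circ\beta\circ\mu$; (ii) $a\circ\alpha\circ(\mu\circ\beta\circ b)=(a\circ\alpha\circ\mu)\circ\beta\circ b$; (iii) $\mu\circ\alpha\circ(a\circ\beta\circ b)=(\mu\circ\alpha\circ a)\circ\beta\circ b$; (iv) $\mu\circ\alpha\circ(a\circ\beta\circ\nu)=(\mu\circ\alpha\circ a)\circ\beta\circ\nu$; (v) $a\circ\alpha\circ(\mu\circ\beta\circ\nu)=(a\circ\alpha\circ\mu)\circ\beta\circ\nu$; (vi) $\mu\circ\alpha\circ(\nu\circ\beta\circ a)=(\mu\circ\alpha\circ\nu)\circ\beta\circ a$; (vii) $\mu\circ\alpha\circ(\nu\circ\beta\circ\delta)=(\mu\circ\alpha\circ\nu)\circ\beta\circ\delta$.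
   Context: $M,\Gamma$ are nonempty sets; a fuzzy subset of $M$ is a map $M\to[0,1]$. A fuzzy $\Gamma$-hyperoperation assigns to each $(a,\gamma,b)\in M\times\Gamma\times M$ a fuzzy subset $a\circ\gamma\circ b$. For $a\in M$ and fuzzy $\mu$: $(a\circ\gamma\circ\mu)(r)=\bigvee_{t\in M}((a\circ\gamma\circ t)(r)\wedge\mu(t))$ if $\mu\ne0$, else $0$; $(\mu\circ\gamma\circ a)(r)=\bigvee_{t\in M}(\mu(t)\wedge(t\circ\gamma\circ a)(r))$ if $\mu\ne0$, else $0$. For fuzzy $\mu,\nu$: $(\mu\circ\gamma\circ\nu)(t)=\bigvee_{p,q\in M}(\mu(p)\wedge(p\circ\gamma\circ q)(t)\wedge\nu(q))$. Since $a\circ\alpha\circ b$ is itself a fuzzy subset, expressions like $(a\circ\alpha\circ b)\circ\beta\circ\mu$ use these definitions. $(M,\circ)$ is a fuzzy $\Gamma$-hypersemigroup if $(a\circ\alpha\circ b)\circ\beta\circ c=a\circ\alpha\circ(b\circ\beta\circ c)$ for all $a,b,c\in M$, $\alpha,\beta\in\Gamma$. *)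

From HB Require Import structures.
From mathcomp Require Import all_boot all_order all_algebra.
From mathcomp Require Import boolp classical_sets reals.
Set Implicit Arguments. Unset Strict Implicit. Unset Printing Implicit Defensive.
Import Order.TTheory GRing.Theory Num.Theory.
Local Open Scope ring_scope.
Local Open Scope classical_set_scope.

Section Fuzzy.
Variables (R : realType) (M G : Type).

Definition is_fuzzy (mu : M -> R) : Prop := forall x, 0 <= mu x <= 1.

Definition fuzzy_Gamma_hyperop (h : M -> G -> M -> M -> R) : Prop :=
  forall a g b, is_fuzzy (h a g b).

Definition el_fz (h : M -> G -> M -> M -> R) (a : M) (g : G) (mu : M -> R)
  : M -> R := fun r =>
  if `[< mu = (fun _ => 0) >] then 0
  else sup [set Num.min (h a g t r) (mu t) | t in [set: M]].

Definition fz_el (h : M -> G -> M -> M -> R) (mu : M -> R) (g : G) (a : M)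
  : M -> R := fun r =>
  if `[< mu = (fun _ => 0) >] then 0
  else sup [set Num.min (mu t) (h t g a r) | t in [set: M]].

Definition fz_fz (h : M -> G -> M -> M -> R) (mu : M -> R) (g : G) (nu : M -> R)
  : M -> R := fun t =>
  sup [set Num.min (Num.min (mu pq.1) (h pq.1 g pq.2 t)) (nu pq.2)
      | pq in [set: M * M]].

Definition fuzzy_Gamma_hypersemigroup (h : M -> G -> M -> M -> R) : Prop :=
  fuzzy_Gamma_hyperop h /\
  forall (a b c : M) (al be : G),
    fz_el h (h a al b) be c = el_fz h a al (h b be c).

End Fuzzy.

From HB Require Import structures.
From mathcomp Require Import all_boot all_order all_algebra.
From mathcomp Require Import boolp classical_sets reals.
From Stdlib Require Import Setoid.
Set Implicit Arguments. Unset Strict Implicit. Unset Printing Implicit Defensive.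
Import Order.TTheory GRing.Theory Num.Theory.
Local Open Scope ring_scope.
Local Open Scope classical_set_scope.

(* Identify an element a with the characteristic function of {a}: then a o g o mu,
   mu o g o a and a o g o b all become products of two fuzzy subsets, so (i)-(vi)
   are instances of the associativity (vii) of that product.  Comparing both sides
   of (vii) with an arbitrary bound z, and using that min distributes over sup,
   turns (vii) into the pointwise statement
     sup_u min (x, (p o al o s)(u), (u o be o t)(r))
       = sup_q min (x, (p o al o q)(r), (s o be o t)(q)),
   which is the hypersemigroup axiom for p, s, t with min x on both sides. *)

Section SupremumBounds.
Variable R : realType.

Lemma le_all_eq (x y : R) : (forall z, x <= z <-> y <= z) -> x = y.
Proof. by move=> xy; apply/le_anti/andP; split; [apply/xy | apply/(xy x)]. Qed.

Lemma range_ubound (T : Type) (f : T -> R) c :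
  (forall t, f t <= c) -> has_ubound (range f).
Proof. by move=> f_le; exists c => _ [t _ <-]. Qed.

Variables (T : Type) (f : T -> R).
Hypothesis f_ub : has_ubound (range f).

Lemma sup_range_le (t0 : T) z : sup (range f) <= z <-> forall t, f t <= z.
Proof.
split=> [sup_le t | f_le].
  exact: le_trans (ub_le_sup f_ub (imageT f t)) sup_le.
by apply: ge_sup; [exists (f t0), t0 | move=> _ [t _ <-]].
Qed.

Lemma min_sup_range_le (t0 : T) x z :
  Num.min x (sup (range f)) <= z <-> forall t, Num.min x (f t) <= z.
Proof.
rewrite ge_min; split=> [/orP[x_le | /(sup_range_le t0) f_le] t | min_le].
- by rewrite ge_min x_le.
- by rewrite ge_min f_le orbT.
have [// | z_lt_x /=] := leP x z.
apply/(sup_range_le t0) => t.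
by have := min_le t; rewrite ge_min leNgt z_lt_x.
Qed.

End SupremumBounds.

Section FuzzyProduct.
Variables (R : realType) (M G : Type) (h : M -> G -> M -> M -> R).
Hypothesis h_fuzzy : fuzzy_Gamma_hyperop h.

Let h_ge0 a g b r : 0 <= h a g b r. Proof. by case/andP: (h_fuzzy a g b r). Qed.
Let h_le1 a g b r : h a g b r <= 1. Proof. by case/andP: (h_fuzzy a g b r). Qed.
Let min_h_le1 x a g b r : Num.min x (h a g b r) <= 1.
Proof. by rewrite ge_min h_le1 orbT. Qed.

Definition fuzzy_point (a : M) : M -> R := fun x => if `[< x = a >] then 1 else 0.

Lemma fz_fz_ubound mu g nu r :
  has_ubound (range (fun pq => Num.min (Num.min (mu pq.1) (h pq.1 g pq.2 r)) (nu pq.2))).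
Proof. by apply: (range_ubound (c := 1)) => pq; rewrite !ge_min h_le1 !orbT. Qed.

Lemma fz_fz_le mu g nu r z :
  fz_fz h mu g nu r <= z <->
  forall p q, Num.min (Num.min (mu p) (h p g q r)) (nu q) <= z.
Proof.
rewrite /fz_fz (sup_range_le (fz_fz_ubound _ _ _ _) (r, r)).
by split=> [le_z p q | le_z [p q]]; [exact: (le_z (p, q)) | exact: le_z].
Qed.

Lemma min_fz_fz_le x mu g nu r z :
  Num.min x (fz_fz h mu g nu r) <= z <->
  forall p q, Num.min x (Num.min (Num.min (mu p) (h p g q r)) (nu q)) <= z.
Proof.
rewrite /fz_fz (min_sup_range_le (fz_fz_ubound _ _ _ _) (r, r)).
by split=> [le_z p q | le_z [p q]]; [exact: (le_z (p, q)) | exact: le_z].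
Qed.

(* The guard [mu = 0] in the definitions is harmless since [h] is nonnegative. *)
Lemma el_fzE a g mu r :
  el_fz h a g mu r = sup (range (fun t => Num.min (h a g t r) (mu t))).
Proof.
rewrite /el_fz; case: asboolP => [-> | //].
have -> : (fun t => Num.min (h a g t r) 0) = fun=> 0.
  by apply/funext => t; rewrite (min_r (h_ge0 _ _ _ _)).
apply: le_all_eq => z; rewrite (sup_range_le (range_ubound (c := 0) (fun=> lexx 0)) r).
by split=> [// | /(_ r)].
Qed.

Lemma fz_elE mu g a r :
  fz_el h mu g a r = sup (range (fun t => Num.min (mu t) (h t g a r))).
Proof.
rewrite /fz_el; case: asboolP => [-> | //].
have -> : (fun t => Num.min 0 (h t g a r)) = fun=> 0.
  by apply/funext => t; rewrite (min_l (h_ge0 _ _ _ _)).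
apply: le_all_eq => z; rewrite (sup_range_le (range_ubound (c := 0) (fun=> lexx 0)) r).
by split=> [// | /(_ r)].
Qed.

Lemma el_fz_point a g mu : el_fz h a g mu = fz_fz h (fuzzy_point a) g mu.
Proof.
apply/funext => r; apply: le_all_eq => z; rewrite fz_fz_le el_fzE.
rewrite (sup_range_le (range_ubound (c := 1) _) r) => [|t]; last by rewrite ge_min h_le1.
split=> [le_z p q | le_z t]; last first.
  by have := le_z a t; rewrite /fuzzy_point asboolT // (min_r (h_le1 _ _ _ _)).
rewrite /fuzzy_point; case: asboolP => [-> | _].
  by rewrite (min_r (h_le1 _ _ _ _)).
by apply: le_trans (le_z q); rewrite le_min !ge_min h_ge0 lexx !orbT.
Qed.

Lemma fz_el_point mu g b : fz_el h mu g b = fz_fz h mu g (fuzzy_point b).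
Proof.
apply/funext => r; apply: le_all_eq => z; rewrite fz_fz_le fz_elE.
rewrite (sup_range_le (range_ubound (c := 1) _) r) => [|t]; last exact: min_h_le1.
split=> [le_z p q | le_z t]; last first.
  by have := le_z t b; rewrite /fuzzy_point asboolT // (min_l (min_h_le1 _ _ _ _ _)).
rewrite /fuzzy_point; case: asboolP => [-> | _].
  by rewrite (min_l (min_h_le1 _ _ _ _ _)).
by apply: le_trans (le_z p); rewrite le_min !ge_min h_ge0 lexx !orbT.
Qed.

Lemma h_point a g b : h a g b = fz_fz h (fuzzy_point a) g (fuzzy_point b).
Proof.
apply/funext => r; apply: le_all_eq => z; rewrite fz_fz_le.
split=> [le_z p q | /(_ a b)]; last first.
  by rewrite /fuzzy_point !asboolT // (min_r (h_le1 _ _ _ _)) (min_l (h_le1 _ _ _ _)).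
apply: le_trans le_z; rewrite /fuzzy_point.
by case: asboolP => [-> | _]; case: asboolP => [-> | _]; rewrite !ge_min ?lexx ?h_ge0 ?orbT.
Qed.

Hypothesis h_assoc :
  forall a b c al be, fz_el h (h a al b) be c = el_fz h a al (h b be c).

Lemma min_h_assoc_le a b c al be r x z :
  (forall u, Num.min x (Num.min (h a al b u) (h u be c r)) <= z) <->
  (forall t, Num.min x (Num.min (h a al t r) (h b be c t)) <= z).
Proof.
have := congr1 (fun f => f r) (h_assoc a b c al be); rewrite /= fz_elE el_fzE => eq_sup.
have ub f : has_ubound (range (fun t => Num.min (f t) (h t be c r))).
  by apply: (range_ubound (c := 1)) => t; exact: min_h_le1.
have ub' f : has_ubound (range (fun t => Num.min (h a al t r) (f t))).
  by apply: (range_ubound (c := 1)) => t; rewrite ge_min h_le1.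
split=> le_z.
  by apply/(min_sup_range_le (ub' _) r); rewrite -eq_sup; exact/(min_sup_range_le (ub _) r).
by apply/(min_sup_range_le (ub _) r); rewrite eq_sup; exact/(min_sup_range_le (ub' _) r).
Qed.

Lemma fz_fzA mu al nu be de :
  fz_fz h mu al (fz_fz h nu be de) = fz_fz h (fz_fz h mu al nu) be de.
Proof.
have minAC3 (m1 m2 m3 x y : R) :
    Num.min (Num.min m1 x) (Num.min (Num.min m2 y) m3)
  = Num.min (Num.min (Num.min m1 m2) m3) (Num.min x y).
  by apply/le_anti; rewrite !le_min !ge_min !lexx /= ?orbT.
have minAC3r (m1 m2 m3 x y : R) :
    Num.min (Num.min x m3) (Num.min (Num.min m1 y) m2)
  = Num.min (Num.min (Num.min m1 m2) m3) (Num.min y x).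
  by apply/le_anti; rewrite !le_min !ge_min !lexx /= ?orbT.
apply/funext => r; apply: le_all_eq => z; rewrite !fz_fz_le.
pose X p s t := Num.min (Num.min (mu p) (nu s)) (de t).
transitivity (forall p s t u, Num.min (X p s t) (Num.min (h p al s u) (h u be t r)) <= z).
  setoid_rewrite min_fz_fz_le; setoid_rewrite minAC3.
  split=> [le_z p s t | le_z p q s t].
    by apply/min_h_assoc_le => q; apply: le_z.
  by move: (le_z p s t) => /min_h_assoc_le; apply.
setoid_rewrite <- minA; setoid_rewrite (minC (fz_fz h mu al nu _)).
setoid_rewrite min_fz_fz_le; setoid_rewrite minAC3r.
by split=> le_z u t p s; apply: le_z.
Qed.

End FuzzyProduct.

Theorem theorem3p14 (R : realType) (M G : Type) (m0 : M) (g0 : G)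
  (h : M -> G -> M -> M -> R) :
  fuzzy_Gamma_hypersemigroup h ->
  forall (a b : M) (al be : G) (mu nu de : M -> R),
    is_fuzzy mu -> is_fuzzy nu -> is_fuzzy de ->
    (el_fz h a al (el_fz h b be mu) = fz_fz h (h a al b) be mu /\
        el_fz h a al (fz_el h mu be b) = fz_el h (el_fz h a al mu) be b /\
        fz_fz h mu al (h a be b) = fz_el h (fz_el h mu al a) be b /\
        fz_fz h mu al (el_fz h a be nu) = fz_fz h (fz_el h mu al a) be nu /\
        el_fz h a al (fz_fz h mu be nu) = fz_fz h (el_fz h a al mu) be nu /\
        fz_fz h mu al (fz_el h nu be a) = fz_el h (fz_fz h mu al nu) be a /\
        fz_fz h mu al (fz_fz h nu be de) = fz_fz h (fz_fz h mu al nu) be de).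
Proof.
move=> [h_fuzzy h_assoc] a b al be mu nu de _ _ _.
rewrite !(el_fz_point h_fuzzy) !(fz_el_point h_fuzzy) !(h_point h_fuzzy).
by do ![exact: fz_fzA | split].
Qed.
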